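(* Let $P_t$ be the current population of the $(\mu+1)$ EA with genotypic clearing (clearing radius $\sigma$, niche capacity $\kappa$, population size $\mu$, with $1\le\kappa<\mu$) on any fitness function, such that the only winners in $P_t$ are $\kappa$ copies of some $x^*\in\{0,1\}^n$ and $H(x,x^* )<\sigma$ for all $x\in P_t$. Let $\varphi(P)=\sum_{x\in P}H(x,x^* )$. Then if no winner different from $x^*$ is created, the expected change of the potential is \[ \mathrm{E}\big[\varphi(P_{t+1})-\varphi(P_t)\mid P_t\big]=1-\frac{\varphi(P_t)}{\mu}\left(\frac{2}{n}+\frac{\kappa}{\mu-\kappa}\right). \]
   Context: $H(x,y)$ denotes the Hamming distance; populations are multisets and the sum defining $\varphi$ runs over all members with multiplicity. The $(\mu+1)$ EA with clearing (population size $\mu$, clearing radius $\sigma$, niche capacity $\kappa$, distance function $\mathrm{d}$), for a fitness function with positive values on $\{0,1\}^n$: $P_0$ consists of $\mu$ bit strings chosen independently and uniformly at random. In generation $t$: choose a parent $x\in P_t$ uniformly at random; create $y$ by flipping each bit of $x$ independently with probability $1/n$; let $P_t^*=P_t\cup\{y\}$; update the fitness values of $P_t^*$ by the clearing procedure: sort $P_t^*$ by decreasing fitness; for $i=1,\dots,|P_t^*|$, if the current fitness of $P[i]$ is positive, set $w:=1$ and for $j=i+1,\dots,|P_t^*|$: if the current fitness of $P[j]$ is positive and $\mathrm{d}(P[i],P[j])<\sigma$ then, if $w<\kappa$ set $w:=w+1$, else set the fitness of $P[j]$ to $0$. Individuals whose fitness is not reset are winners, the others are cleared. Then choose $z\in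 P_t$ with worst (cleared) fitness uniformly at random; if the (cleared) fitness of $y$ is at least that of $z$, set $P_{t+1}=P_t^*\setminus\{z\}$, otherwise $P_{t+1}=P_t^*\setminus\{y\}$. Genotypic clearing uses $\mathrm{d}=H$. *)

From mathcomp Require Import all_boot all_order all_algebra.
Set Implicit Arguments. Unset Strict Implicit. Unset Printing Implicit Defensive.
Import Order.TTheory GRing.Theory Num.Theory.
Local Open Scope ring_scope.

Definition bits (n : nat) := {ffun 'I_n -> bool}.
Definition bzero (n : nat) : bits n := [ffun => false].
Definition ham (n : nat) (x y : bits n) : nat := #|[pred i | x i != y i]|.

(* Clearing procedure on a population given as a list; individuals are
   identified by their positions.  Ties in the sort by decreasing fitness
   are broken stably (by position in the list). *)
Section Clearing.
Variables (R : realFieldType) (T : Type) (x0 : T) (f : T -> R)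
          (d : T -> T -> nat) (sigma kappa : nat).

Definition upd (cur : nat -> R) (j : nat) (v : R) : nat -> R :=
  fun k => if k == j then v else cur k.

Fixpoint clear_inner (s : seq T) (i : nat) (rest : seq nat) (w : nat)
    (cur : nat -> R) : nat -> R :=
  match rest with
  | [::] => cur
  | j :: rest' =>
      if (0 < cur j) && (d (nth x0 s i) (nth x0 s j) < sigma)%N then
        if (w < kappa)%N then clear_inner s i rest' w.+1 cur
        else clear_inner s i rest' w (upd cur j 0)
      else clear_inner s i rest' w cur
  end.

Fixpoint clear_outer (s : seq T) (ord : seq nat) (cur : nat -> R) : nat -> R :=
  match ord with
  | [::] => cur
  | i :: rest =>
      clear_outer s rest (if 0 < cur i then clear_inner s i rest 1 cur else cur)
  end.

Definition sorted_idx (s : seq T) : seq nat :=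
  sort (fun i j => f (nth x0 s j) <= f (nth x0 s i)) (iota 0 (size s)).

Definition cleared (s : seq T) : nat -> R :=
  clear_outer s (sorted_idx s) (fun k => f (nth x0 s k)).

(* winner = fitness not reset (fitness values are positive) *)
Definition winner (s : seq T) (k : nat) : bool := 0 < cleared s k.

Definition winners (s : seq T) : seq T :=
  [seq nth x0 s k | k <- iota 0 (size s) & winner s k].

End Clearing.

Section EA.
Variables (R : realFieldType) (n : nat) (f : bits n -> R) (sigma kappa : nat).

Definition mutprob (x y : bits n) : R :=
  (n%:R^-1) ^+ ham x y * (1 - n%:R^-1) ^+ (n - ham x y).

Definition rem_idx (Q : seq (bits n)) (z : nat) : seq (bits n) :=
  take z Q ++ drop z.+1 Q.

Definition clearG (Q : seq (bits n)) : nat -> R :=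
  cleared (bzero n) f (@ham n) sigma kappa Q.

Definition winnerG (Q : seq (bits n)) : nat -> bool :=
  winner (bzero n) f (@ham n) sigma kappa Q.

Definition winnersG (Q : seq (bits n)) : seq (bits n) :=
  winners (bzero n) f (@ham n) sigma kappa Q.

Definition worst_idx (P : seq (bits n)) (y : bits n) : seq nat :=
  let c := clearG (rcons P y) in
  [seq k <- iota 0 (size P) | all (fun k' => c k <= c k') (iota 0 (size P))].

Definition next_pop (P : seq (bits n)) (y : bits n) (z : nat) : seq (bits n) :=
  let c := clearG (rcons P y) in
  if c z <= c (size P) then rem_idx (rcons P y) z else P.

(* expectation of g(P_{t+1}) given offspring y (z uniform among worst) *)
Definition exp_given_y (g : seq (bits n) -> R) (P : seq (bits n)) (y : bits n) : R :=
  (size (worst_idx P y))%:R^-1 * \sum_(z <- worst_idx P y) g (next_pop P y z).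

Definition step_exp (g : seq (bits n) -> R) (P : seq (bits n)) : R :=
  \sum_(i < size P) (size P)%:R^-1 *
    \sum_(y : bits n) mutprob (nth (bzero n) P i) y * exp_given_y g P y.

End EA.

Definition phi (n : nat) (xs : bits n) (P : seq (bits n)) : nat :=
  sumn [seq ham x xs | x <- P].

From mathcomp Require Import all_boot all_order all_algebra.
From mathcomp Require Import zify ring lra.
Set Implicit Arguments. Unset Strict Implicit. Unset Printing Implicit Defensive.
Import Order.TTheory GRing.Theory Num.Theory.
Local Open Scope ring_scope.

(* Every individual of [P ++ [y]] lies within [sigma] of the fittest one, which is [xs]
   (the offspring too: it is a winner or was cleared by one), so clearing sees a single
   niche: exactly the first [kappa] individuals of the stable fitness order win.  The [kappa] copies of [xs] in [P] precede the offspring [y] in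
   that order, hence [y] is cleared and replaces a member of [P] drawn uniformly among
   its [mu - kappa] cleared members.  The winners of [P] are copies of [xs], so the
   cleared members carry all of [phi xs P], and given [y] the expected change of the
   potential is [ham y xs - phi xs P / (mu - kappa)].  Standard bit mutation turns
   [ham x xs] into [ham x xs * (1 - 2/n) + 1] in expectation; averaging over the uniformly
   chosen parent gives the formula. *)

Section Hamming.
Variable n : nat.
Implicit Types x y z : bits n.

Lemma ham_sym x y : ham x y = ham y x.
Proof. by apply: eq_card => i; rewrite !inE eq_sym. Qed.

Lemma ham_xx x : ham x x = 0%N.
Proof. by apply: eq_card0 => i; rewrite !inE eqxx. Qed.

Lemma card_agree x y : #|[pred i | x i == y i]| = (n - ham x y)%N.
Proof.
have := cardC [pred i | x i != y i]; rewrite card_ord => E.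
by rewrite -[X in (X - _)%N]E addKn; apply: eq_card => i; rewrite !inE negbK.
Qed.

Lemma natr_ham (R : nzSemiRingType) x y : (ham x y)%:R = \sum_i ((x i != y i)%:R : R).
Proof.
by rewrite /ham -sum1_card natr_sum big_mkcond; apply: eq_bigr => i _; rewrite inE; case: ifP.
Qed.

End Hamming.

Section BitFlip.
Variables (R : realFieldType) (n : nat) (p : R).
Implicit Types x y z : bits n.

Definition flip_factor x (i : 'I_n) (b : bool) : R := if x i != b then p else 1 - p.

Definition bitflip_prob x y : R := \prod_i flip_factor x i (y i).

Lemma sum_flip_factor x i : \sum_b flip_factor x i b = 1.
Proof. by rewrite big_bool /flip_factor; case: (x i) => /=; rewrite ?subrK // addrC subrK. Qed.

Lemma bitflip_probE x y : bitflip_prob x y = p ^+ ham x y * (1 - p) ^+ (n - ham x y).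
Proof.
rewrite /bitflip_prob /flip_factor (bigID (fun i => x i != y i)) /=.
rewrite (eq_bigr (fun=> p)); last by move=> i ->.
rewrite [X in _ * X](eq_bigr (fun=> 1 - p)); last by move=> i /negbTE ->.
rewrite !prodr_const -card_agree.
by congr (_ ^+ _ * _ ^+ _); apply: eq_card => i; rewrite unfold_in /= ?negbK.
Qed.

Lemma sum_bitflip_prob x : \sum_y bitflip_prob x y = 1.
Proof.
rewrite -(bigA_distr_bigA (flip_factor x)) /=.
by rewrite big1 // => i _; rewrite sum_flip_factor.
Qed.

Lemma bitflip_prob_ge0 x y : 0 <= p <= 1 -> 0 <= bitflip_prob x y.
Proof.
case/andP=> p_ge0 p_le1; apply: prodr_ge0 => i _.
by rewrite /flip_factor; case: ifP; rewrite ?subr_ge0.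
Qed.

(* All factors except the [j]-th sum to one. *)
Lemma sum_bitflip_prob_bit x j (c : bool -> R) :
  \sum_y bitflip_prob x y * c (y j) = \sum_b flip_factor x j b * c b.
Proof.
pose G i b := flip_factor x i b * (if i == j then c b else 1).
transitivity (\sum_(y : bits n) \prod_i G i (y i)).
  apply: eq_bigr => y _; rewrite /G big_split /=; congr (_ * _).
  by rewrite (bigD1 j) //= eqxx big1 ?mulr1 // => i /negbTE ->.
rewrite -(bigA_distr_bigA G) /= (bigD1 j) //= [X in _ * X]big1 ?mulr1.
  by apply: eq_bigr => b _; rewrite /G eqxx.
move=> i /negbTE ij; rewrite -[RHS](sum_flip_factor x i).
by apply: eq_bigr => b _; rewrite /G ij mulr1.
Qed.

Lemma expected_ham_bitflip x z :
  \sum_y bitflip_prob x y * (ham y z)%:R = (ham x z)%:R * (1 - 2 * p) + n%:R * p.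
Proof.
transitivity (\sum_j (p + (x j != z j)%:R * (1 - 2 * p))).
  under eq_bigr do rewrite natr_ham mulr_sumr.
  rewrite exchange_big /=; apply: eq_bigr => j _.
  rewrite (sum_bitflip_prob_bit x j (fun b => (b != z j)%:R)) big_bool /flip_factor.
  by case: (x j); case: (z j) => /=; ring.
by rewrite big_split /= sumr_const card_ord -mulr_suml -natr_ham addrC (mulr_natl p n).
Qed.

Lemma expected_ham_bitflip_sub x z (g : bits n -> R) c :
  (forall y, bitflip_prob x y != 0 -> g y = (ham y z)%:R - c) ->
  \sum_y bitflip_prob x y * g y = (ham x z)%:R * (1 - 2 * p) + n%:R * p - c.
Proof.
move=> gE; transitivity (\sum_y bitflip_prob x y * ((ham y z)%:R - c)).
  apply: eq_bigr => y _.
  by have [->|/gE ->] := eqVneq (bitflip_prob x y) 0; rewrite ?mul0r.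
under eq_bigr do rewrite mulrBr.
by rewrite sumrB expected_ham_bitflip -mulr_suml sum_bitflip_prob mul1r.
Qed.

End BitFlip.

Lemma mutprobE (R : realFieldType) n (x y : bits n) :
  mutprob R x y = bitflip_prob n%:R^-1 x y.
Proof. by rewrite bitflip_probE. Qed.

Section Clearing.
Variables (R : realFieldType) (T : Type) (x0 : T) (f : T -> R)
          (d : T -> T -> nat) (sigma kappa : nat).
Implicit Types (s : seq T) (cur : nat -> R).

Local Notation clear_inner := (clear_inner x0 d sigma kappa).
Local Notation clear_outer := (clear_outer x0 d sigma kappa).
Local Notation near s i j := (d (nth x0 s i) (nth x0 s j) < sigma)%N.

Lemma clear_inner_notin s i rest w cur k :
  k \notin rest -> clear_inner s i rest w cur k = cur k.
Proof.
elim: rest w cur => [//|j rest IH] w cur /=.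
rewrite in_cons negb_or => /andP[kj krest].
have upd_k : upd cur j 0 k = cur k by rewrite /upd (negbTE kj).
by case: ifP => _; [case: ifP => _ |]; rewrite IH.
Qed.

Lemma clear_inner_far s i rest w cur k :
  ~~ near s i k -> clear_inner s i rest w cur k = cur k.
Proof.
move=> far; elim: rest w cur => [//|j rest IH] w cur /=.
case: ifP => [/andP[_ near_j]|_]; last exact: IH.
case: ifP => _; rewrite IH //.
by rewrite /upd; case: eqP => // kj; rewrite kj near_j in far.
Qed.

Lemma clear_inner_under_capacity s i rest w cur :
  (w + count (fun j => (0 < cur j)%R) rest <= kappa)%N ->
  clear_inner s i rest w cur = cur.
Proof.
elim: rest w => [//|j rest IH] w /=.
case: ifP => [/andP[-> _]|_] cap; last by apply: IH; move: cap; case: (0 < cur j); lia.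
by rewrite ifT; [apply: IH|]; lia.
Qed.

(* [w] counts the winners of the niche of [i] met so far. *)
Lemma clear_inner_niche s i rest w cur :
  uniq rest -> all (fun j => (0 < cur j) && near s i j) rest -> (w <= kappa)%N ->
  forall k, clear_inner s i rest w cur k =
            if k \in drop (kappa - w) rest then 0 else cur k.
Proof.
elim: rest w cur => [//|j rest IH] w cur /=.
move=> /andP[j_rest uniq_rest] /andP[/andP[-> ->] niche] w_le k /=.
case: ltnP => w_cap.
  by rewrite IH // (_ : kappa - w = (kappa - w.+1).+1)%N; [|lia].
have -> : w = kappa by lia.
rewrite IH //; last first.
  apply/allP => j' j'_rest; have /andP[pos near_j'] := allP niche j' j'_rest.
  by rewrite /upd; case: eqP => [ej|_]; [rewrite -ej j'_rest in j_rest | rewrite pos].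
by rewrite subnn !drop0 in_cons /upd; case: eqP => // _; case: (k \in rest).
Qed.

Lemma clear_outer_notin s ord cur k : k \notin ord -> clear_outer s ord cur k = cur k.
Proof.
elim: ord cur => [//|i ord IH] cur /=.
rewrite in_cons negb_or => /andP[ki kord].
by rewrite IH //; case: ifP => // _; apply: clear_inner_notin.
Qed.

Lemma clear_outer_under_capacity s ord cur :
  (count (fun j => (0 < cur j)%R) ord <= kappa)%N -> clear_outer s ord cur = cur.
Proof.
elim: ord cur => [//|i ord IH] cur /=.
case: ifP => pos_i cap; last by apply: IH; move: cap; rewrite ?pos_i.
by rewrite clear_inner_under_capacity // IH //; lia.
Qed.

Lemma clear_outer_cleared_near s ord cur k :
  uniq ord -> 0 < cur k -> ~~ (0 < clear_outer s ord cur k) ->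
  exists2 i, i \in ord & (0 < clear_outer s ord cur i) && near s i k.
Proof.
elim: ord cur => [|i ord IH] cur /=; first by move=> _ ->.
move=> /andP[i_ord uniq_ord] pos_k.
set cur' := (if 0 < cur i then _ else _).
case pos'_k : (0 < cur' k).
  move=> /(IH cur' uniq_ord pos'_k) [i' i'_ord win_i'].
  by exists i' => //; rewrite in_cons i'_ord orbT.
move=> _; move: pos'_k; rewrite /cur'; case: ifP => pos_i; last by rewrite pos_k.
exists i; first exact: mem_head.
rewrite clear_outer_notin // clear_inner_notin // pos_i /=.
case: ltnP => // far.
by rewrite clear_inner_far -?leqNgt // pos_k in pos'_k.
Qed.

Lemma clear_outer_single_niche s h rest cur :
  uniq (h :: rest) -> (0 < kappa)%N -> 0 < cur h ->
  (forall j, j \in rest -> (0 < cur j) && near s h j) ->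
  forall k, clear_outer s (h :: rest) cur k =
            if k \in drop kappa (h :: rest) then 0 else cur k.
Proof.
move=> /= /andP[h_rest uniq_rest] kappa_gt0 pos_h niche k.
have niche_all : all (fun j => (0 < cur j) && near s h j) rest by apply/allP.
have cleared_rest := clear_inner_niche uniq_rest niche_all kappa_gt0.
rewrite pos_h clear_outer_under_capacity; last first.
  rewrite -[X in count _ X](cat_take_drop (kappa - 1) rest) count_cat.
  rewrite (@eq_in_count _ _ pred0 (drop _ _)) => [|j j_drop]; last first.
    by rewrite /= cleared_rest j_drop ltxx.
  by rewrite count_pred0 addn0 (leq_trans (count_size _ _)) // size_take_min; lia.
by rewrite cleared_rest; case: (kappa) kappa_gt0 => //= kappa' _; rewrite subn1.
Qed.

Local Notation sorted_idx := (sorted_idx x0 f).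
Local Notation cleared := (cleared x0 f d sigma kappa).
Local Notation winner := (winner x0 f d sigma kappa).
Local Notation fit s i := (f (nth x0 s i)).

Lemma perm_sorted_idx s : perm_eq (sorted_idx s) (iota 0 (size s)).
Proof. by rewrite perm_sort. Qed.

Lemma uniq_sorted_idx s : uniq (sorted_idx s).
Proof. by rewrite (perm_uniq (perm_sorted_idx s)) iota_uniq. Qed.

Lemma mem_sorted_idx s k : (k \in sorted_idx s) = (k < size s)%N.
Proof. by rewrite (perm_mem (perm_sorted_idx s)) mem_iota. Qed.

Lemma sorted_idx_head_max s k :
  (k < size s)%N -> fit s k <= fit s (head 0%N (sorted_idx s)).
Proof.
rewrite -mem_sorted_idx.
have leT_tr : transitive (fun i j => fit s j <= fit s i).
  by move=> j i k' le_ji le_kj; apply: le_trans le_ji.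
have := sort_sorted (fun i j => le_total (fit s j) (fit s i)) (iota 0 (size s)).
rewrite -/(sorted_idx s); case: (sorted_idx s) => [//|h rest] /= /(order_path_min leT_tr).
by move=> /allP max_h; rewrite in_cons => /predU1P[-> //|/max_h].
Qed.

(* Ties are broken by the stability of [sort]. *)
Lemma sorted_idx_stable s j k :
  (j < k < size s)%N -> fit s k <= fit s j ->
  (index j (sorted_idx s) < index k (sorted_idx s))%N.
Proof.
move=> /andP[jk ks] le_kj.
pose leT i i' := fit s i' <= fit s i.
pose lex i i' := leT i i' && (leT i' i ==> (i < i')%N).
have lex_tr : transitive lex.
  move=> b a c /andP[le_ab lt_ab] /andP[le_bc lt_bc].
  rewrite /lex /leT (le_trans le_bc le_ab) /=.
  apply/implyP => le_ca; apply: ltn_trans (implyP lt_ab _) (implyP lt_bc _).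
    exact: le_trans le_ca le_bc.
  exact: le_trans le_ab le_ca.
have lex_ord : pairwise lex (sorted_idx s).
  rewrite -sorted_pairwise //; apply: (sort_stable _ ltn_trans (iota_ltn_sorted 0 _)).
  by move=> a b; apply: le_total.
have js : (j < size s)%N by apply: ltn_trans ks.
have j_ord : j \in sorted_idx s by rewrite mem_sorted_idx.
have k_ord : k \in sorted_idx s by rewrite mem_sorted_idx.
have [//|lt_kj|eq_jk] := ltngtP (index j (sorted_idx s)) (index k (sorted_idx s)).
  have := elimT (pairwiseP 0%N) lex_ord _ _ _ _ lt_kj.
  rewrite !inE !index_mem !nth_index // => /(_ k_ord j_ord).
  by rewrite /lex /leT le_kj /= ltnNge (ltnW jk) andbF.
by move: jk; rewrite (index_inj 0%N j_ord k_ord eq_jk) ltnn.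
Qed.

Lemma winner_head_sorted_idx s :
  (forall x, 0 < f x) -> (0 < size s)%N -> winner s (head 0%N (sorted_idx s)).
Proof.
move=> f_gt0; rewrite -mem_sorted_idx /winner /cleared.
have := uniq_sorted_idx s; case: (sorted_idx s) => [//|h rest] /= /andP[h_rest _] _.
by rewrite f_gt0 clear_outer_notin // clear_inner_notin.
Qed.

Lemma cleared_near_winner s k :
  (forall x, 0 < f x) -> (k < size s)%N -> ~~ winner s k ->
  exists2 i, (i < size s)%N & winner s i && near s i k.
Proof.
move=> f_gt0 ks lost_k.
have [i i_ord win_i] := clear_outer_cleared_near (uniq_sorted_idx s) (f_gt0 _) lost_k.
by exists i; rewrite -?mem_sorted_idx.
Qed.

Lemma cleared_single_niche s :
  (forall x, 0 < f x) -> (0 < kappa)%N ->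
  (forall j, (j < size s)%N -> near s (head 0%N (sorted_idx s)) j) ->
  forall k, cleared s k = if k \in drop kappa (sorted_idx s) then 0 else fit s k.
Proof.
move=> f_gt0 kappa_gt0; rewrite /cleared.
have := uniq_sorted_idx s; have := mem_sorted_idx s.
case: (sorted_idx s) => [|h rest] mem_ord uniq_ord /= near_h k; first by case: kappa kappa_gt0.
apply: clear_outer_single_niche => // j j_rest.
by rewrite f_gt0 near_h // -mem_ord in_cons j_rest orbT.
Qed.

End Clearing.

Section SeqIndex.
Variables (T : eqType) (s : seq T).
Hypothesis uniq_s : uniq s.

Lemma in_drop_uniq x i : x \in s -> (x \in drop i s) = (i <= index x s)%N.
Proof.
move=> x_s; rewrite leqNgt -in_take //.
have := uniq_s; rewrite -[X in uniq X](cat_take_drop i s) cat_uniq => /and3P[_ /hasPn disj _].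
case: (boolP (x \in take i s)) => [x_take | x_ntake].
  by apply/negP => /disj; rewrite x_take.
by move: x_s; rewrite -{1}(cat_take_drop i s) mem_cat (negbTE x_ntake).
Qed.

Lemma count_mem_drop i : count (mem (drop i s)) s = size (drop i s).
Proof.
rewrite -size_filter; apply/perm_size/uniq_perm; rewrite ?filter_uniq ?drop_uniq //.
by move=> x; rewrite mem_filter andb_idr //; apply: mem_drop.
Qed.

Lemma size_preceding_le (A : seq T) x :
  uniq A -> {subset A <= s} -> (forall a, a \in A -> (index a s < index x s)%N) ->
  (size A <= index x s)%N.
Proof.
move=> uniq_A sub_A prec_A; rewrite -[index x s](@size_takel _ _ s) ?index_size //.
by apply: uniq_leq_size => // a a_A; rewrite in_take ?sub_A ?prec_A.
Qed.

End SeqIndex.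

Lemma count_mem_winners (R : realFieldType) (T : eqType) (x0 : T) (f : T -> R)
    (d : T -> T -> nat) (sigma kappa : nat) (s : seq T) (x : T) :
  (count_mem x (winners x0 f d sigma kappa s) <= count_mem x s)%N.
Proof.
rewrite /winners count_map count_filter -[X in (_ <= count _ X)%N](mkseq_nth x0 s) count_map.
by apply: sub_count => k /andP[].
Qed.

Section Potential.
Variables (n : nat) (xs : bits n).

Lemma phi_rcons (P : seq (bits n)) y : phi xs (rcons P y) = (phi xs P + ham y xs)%N.
Proof. by rewrite /phi -cats1 map_cat sumn_cat /= addn0. Qed.

Lemma phi_rem_idx (s : seq (bits n)) z : (z < size s)%N ->
  phi xs s = (phi xs (rem_idx s z) + ham (nth (bzero n) s z) xs)%N.
Proof.
move=> zs; rewrite /phi /rem_idx -{1}(cat_take_drop z s) (drop_nth (bzero n)) //.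
by rewrite !map_cat !sumn_cat /=; lia.
Qed.

Lemma natr_phi (R : nzSemiRingType) (P : seq (bits n)) :
  (phi xs P)%:R = \sum_(z <- iota 0 (size P)) (ham (nth (bzero n) P z) xs)%:R :> R.
Proof. by rewrite /phi -{1}(mkseq_nth (bzero n) P) -map_comp sumnE big_map natr_sum. Qed.

End Potential.

Section OneOffspring.
Variables (R : realFieldType) (n mu sigma kappa : nat) (f : bits n -> R).
Variables (P : seq (bits n)) (xs y : bits n).
Hypotheses (kappa_gt0 : (0 < kappa)%N) (kappa_lt_mu : (kappa < mu)%N).
Hypotheses (f_gt0 : forall x, 0 < f x) (size_P : size P = mu).
Hypothesis winners_P : winnersG f sigma kappa P = nseq kappa xs.
Hypothesis P_near : forall x, x \in P -> (ham x xs < sigma)%N.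
Hypothesis winners_Py : forall k, (k <= mu)%N ->
  winnerG f sigma kappa (rcons P y) k -> nth (bzero n) (rcons P y) k = xs.

Local Notation Py := (rcons P y).
Local Notation ord := (sorted_idx (bzero n) f Py).
Local Notation lost := (drop kappa ord).

Lemma size_Py : size Py = mu.+1.
Proof. by rewrite size_rcons size_P. Qed.

Lemma nth_Py k : (k < mu)%N -> nth (bzero n) Py k = nth (bzero n) P k.
Proof. by move=> k_mu; rewrite nth_rcons size_P k_mu. Qed.

Lemma nth_Py_mu : nth (bzero n) Py mu = y.
Proof. by rewrite nth_rcons size_P ltnn eqxx. Qed.

Lemma mem_ord k : (k \in ord) = (k <= mu)%N.
Proof. by rewrite mem_sorted_idx size_Py. Qed.

Lemma nth_Py_head : nth (bzero n) Py (head 0%N ord) = xs.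
Proof.
apply: winners_Py; last by apply: winner_head_sorted_idx; rewrite ?size_Py.
by rewrite -mem_ord -nth0 mem_nth // (perm_size (perm_sorted_idx _ _ _)) size_iota size_Py.
Qed.

Lemma Py_near j : (j <= mu)%N -> (ham xs (nth (bzero n) Py j) < sigma)%N.
Proof.
have sigma_gt0 : (0 < sigma)%N.
  have P_gt0 : (0 < size P)%N by rewrite size_P; lia.
  by have := P_near (mem_nth (bzero n) P_gt0); lia.
rewrite leq_eqVlt => /predU1P[-> | j_mu]; last first.
  by rewrite nth_Py // ham_sym P_near // mem_nth ?size_P.
have [win_y | lost_y] := boolP (winnerG f sigma kappa Py mu).
  by rewrite winners_Py // ham_xx.
have mu_Py : (mu < size Py)%N by rewrite size_Py.
have [i i_Py /andP[win_i]] := cleared_near_winner f_gt0 mu_Py lost_y.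
by rewrite winners_Py // -ltnS -size_Py.
Qed.

Lemma clearG_Py k :
  clearG f sigma kappa Py k = if k \in lost then 0 else f (nth (bzero n) Py k).
Proof.
apply: cleared_single_niche => // j; rewrite size_Py ltnS nth_Py_head.
exact: Py_near.
Qed.

Lemma winnerG_Py k : winnerG f sigma kappa Py k = (k \notin lost).
Proof.
rewrite /winnerG /winner -/(clearG f sigma kappa Py) clearG_Py.
by case: ifP => _; rewrite ?ltxx ?f_gt0.
Qed.

(* The [kappa] copies of [xs] in [P] are at least as fit as [y] and sit before it. *)
Lemma offspring_lost : mu \in lost.
Proof.
have mu_ord : mu \in ord by rewrite mem_ord.
rewrite in_drop_uniq ?uniq_sorted_idx //.
have fy_le : f y <= f xs.
  by rewrite -nth_Py_mu -nth_Py_head; apply: sorted_idx_head_max; rewrite size_Py.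
pose A := [seq j <- iota 0 mu | nth (bzero n) P j == xs].
have kappa_le : (kappa <= size A)%N.
  have -> : size A = count_mem xs P.
    by rewrite size_filter -[in RHS](mkseq_nth (bzero n) P) count_map size_P.
  have := count_mem_winners (bzero n) f (@ham n) sigma kappa P xs.
  by rewrite -/(winnersG f sigma kappa P) winners_P count_nseq /= eqxx mul1n.
apply: leq_trans kappa_le _; apply: size_preceding_le.
- by rewrite filter_uniq ?iota_uniq.
- by move=> j; rewrite mem_filter mem_iota mem_ord => /andP[_ /andP[_ /ltnW]].
move=> j; rewrite mem_filter mem_iota /= => /andP[/eqP P_j j_mu].
apply: sorted_idx_stable; first by rewrite size_Py ltnSn andbT.
by rewrite nth_Py_mu nth_Py // P_j.
Qed.

Lemma count_lost_P : count (mem lost) (iota 0 mu) = (mu - kappa)%N.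
Proof.
have := count_mem_drop (uniq_sorted_idx (bzero n) f Py) kappa.
rewrite (permP (perm_sorted_idx _ _ _)) size_drop (perm_size (perm_sorted_idx _ _ _)).
by rewrite size_iota size_Py -addn1 iotaD count_cat /= offspring_lost; lia.
Qed.

Lemma worst_idx_Py : worst_idx f sigma kappa P y = [seq k <- iota 0 mu | k \in lost].
Proof.
have [k0 k0_mu k0_lost] : exists2 k0, k0 \in iota 0 mu & k0 \in lost.
  by apply/(@hasP _ (mem lost)); rewrite has_count count_lost_P subn_gt0.
rewrite /worst_idx size_P; apply: eq_in_filter => k k_mu.
case: ifP (clearG_Py k) => k_lost ->.
  by apply/allP => k' _; rewrite clearG_Py; case: ifP => // _; apply: ltW.
apply/negbTE/negP => /allP /(_ k0 k0_mu).
by rewrite clearG_Py k0_lost leNgt f_gt0.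
Qed.

Lemma phi_next_pop z : (z < mu)%N -> z \in lost ->
  (phi xs (next_pop f sigma kappa P y z) + ham (nth (bzero n) P z) xs
   = phi xs P + ham y xs)%N.
Proof.
move=> z_mu z_lost.
rewrite /next_pop size_P !clearG_Py z_lost offspring_lost lexx -nth_Py // -(phi_rcons xs P y).
by rewrite [RHS](@phi_rem_idx _ xs Py z) // size_Py ltnW.
Qed.

Lemma sum_ham_lost :
  \sum_(z <- iota 0 mu | z \in lost) (ham (nth (bzero n) P z) xs)%:R = (phi xs P)%:R :> R.
Proof.
rewrite natr_phi size_P [RHS](bigID (mem lost)) /= [X in _ = _ + X]big1_seq ?addr0 //.
move=> z /andP[z_won]; rewrite mem_iota /= => z_mu.
by rewrite -nth_Py // winners_Py ?ham_xx ?winnerG_Py ?(ltnW z_mu).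
Qed.

Lemma exp_given_y_Py :
  exp_given_y f sigma kappa (fun Q => (phi xs Q)%:R - (phi xs P)%:R) P y
  = (ham y xs)%:R - (phi xs P)%:R / (mu - kappa)%:R.
Proof.
rewrite /exp_given_y worst_idx_Py size_filter count_lost_P big_filter.
rewrite big_seq_cond (eq_bigr (fun z => (ham y xs)%:R - (ham (nth (bzero n) P z) xs)%:R)).
  rewrite -big_seq_cond sumrB sum_ham_lost big_const_seq iter_addr addr0 count_lost_P.
  have : (mu - kappa)%:R != 0 :> R by rewrite pnatr_eq0 subn_eq0 -ltnNge.
  by rewrite -[(ham y xs)%:R *+ _]mulr_natr; move: ((mu - kappa)%:R) => m m_neq0; field.
move=> z /andP[]; rewrite mem_iota /= => z_mu z_lost.
have := congr1 (fun m => m%:R : R) (phi_next_pop z_mu z_lost).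
by rewrite /= !natrD; lra.
Qed.

End OneOffspring.

Theorem lemma4 (R : realFieldType) (n mu sigma kappa : nat) (f : bits n -> R)
    (P : seq (bits n)) (xs : bits n) :
  (0 < n)%N -> (1 <= kappa)%N -> (kappa < mu)%N ->
  (forall x, 0 < f x) ->
  size P = mu ->
  winnersG f sigma kappa P = nseq kappa xs ->
  (forall x, x \in P -> (ham x xs < sigma)%N) ->
  (forall (i : nat) (y : bits n), (i < mu)%N ->
     0 < mutprob R (nth (bzero n) P i) y ->
     forall k, (k <= mu)%N -> winnerG f sigma kappa (rcons P y) k ->
       nth (bzero n) (rcons P y) k = xs) ->
  step_exp f sigma kappa (fun Q => (phi xs Q)%:R - (phi xs P)%:R) P
  = 1 - (phi xs P)%:R / mu%:R * (2 / n%:R + kappa%:R / (mu - kappa)%:R).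
Proof.
move=> n_gt0 kappa_gt0 kappa_lt_mu f_gt0 size_P winners_P P_near winners_Py.
have n_neq0 : n%:R != 0 :> R by rewrite pnatr_eq0 -lt0n.
have rate : 0 <= (n%:R^-1 : R) <= 1 by rewrite invr_ge0 ler0n invf_le1 ?ler1n ?ltr0n.
pose c : R := (phi xs P)%:R / (mu - kappa)%:R.
transitivity (\sum_(i < mu) mu%:R^-1 * ((ham (nth (bzero n) P i) xs)%:R * (1 - 2 / n%:R) + 1 - c)).
  rewrite /step_exp size_P; apply: eq_bigr => i _; congr (_ * _).
  under eq_bigr do rewrite mutprobE.
  rewrite (expected_ham_bitflip_sub (z := xs) (c := c)) ?mulfV // => y mut_neq0.
  apply: exp_given_y_Py => // k; apply: (winners_Py i) => //.
  by rewrite mutprobE lt0r mut_neq0 bitflip_prob_ge0.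
rewrite -mulr_sumr !sumrB big_split /= -mulr_suml !sumr_const card_ord -[c *+ mu]mulr_natr.
rewrite -(big_mkord xpredT (fun i => (ham (nth (bzero n) P i) xs)%:R)) /index_iota subn0.
rewrite -size_P -natr_phi size_P /c natrB ?(ltnW kappa_lt_mu) //.
have : mu%:R != 0 :> R by rewrite pnatr_eq0 -lt0n (leq_ltn_trans _ kappa_lt_mu).
have : mu%:R - kappa%:R != 0 :> R.
  by rewrite -natrB ?(ltnW kappa_lt_mu) // pnatr_eq0 subn_eq0 -ltnNge.
move: (mu%:R) (kappa%:R) (phi xs P)%:R => m k ph mk_neq0 m_neq0.
by field; rewrite m_neq0 mk_neq0 n_neq0.
Qed.
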